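(* Let $G$ be a graph of order $n$ with a clique partition $F$ of size $|F|=k$, and let $1\le i\le\min\{n,k\}$. Let $q_i(G)$ denote the $i$th largest eigenvalue of the signless Laplacian $Q(G)=D(G)+\mathcal A(G)$. (i) If $G$ is $t$ clique-regular with respect to $F$, then $q_i(G)-\lambda_i(G)\ge t$. (ii) If $G$ is $s$ clique-uniform with respect to $F$, then $q_i(G)-\lambda_i(P_G)\ge s$.
   Context: All graphs are finite and simple; $\mathcal A(G)$ is the adjacency matrix, $D(G)$ the diagonal matrix of vertex degrees, and $\lambda_i(\cdot)$ denotes the $i$th largest adjacency eigenvalue. A clique partition of $G$ is a set $F=\{C_1,\dots,C_k\}$ of cliques such that every edge lies in exactly one $C_j$. The clique-degree of a vertex is the number of cliques of $F$ containing it; $G$ is $t$ clique-regular if every clique-degree equals $t$, and $s$ clique-uniform if $|C_j|=s$ for all $j$. The clique partition graph $P_G$ has vertex set $\{1,\dots,k\}$ with $i\neq j$ adjacent iff $C_i\cap C_j\neq\emptyset$. *)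

From HB Require Import structures.
From mathcomp Require Import all_boot all_order all_algebra.
From mathcomp Require Import reals.
Set Implicit Arguments. Unset Strict Implicit. Unset Printing Implicit Defensive.
Import Order.TTheory GRing.Theory Num.Theory.
Local Open Scope ring_scope.

Definition simple_graph n (e : rel 'I_n) : Prop :=
  (forall u v, e u v = e v u) /\ (forall u, ~~ e u u).

Definition adjmx (R : realType) n (e : rel 'I_n) : 'M[R]_n :=
  \matrix_(u, v) (e u v)%:R.

Definition degmx (R : realType) n (e : rel 'I_n) : 'M[R]_n :=
  \matrix_(u, v) ((u == v)%:R * (#|[set w | e u w]|)%:R).

Definition signless_lap (R : realType) n (e : rel 'I_n) : 'M[R]_n :=
  degmx R e + adjmx R e.

(* s is the list of eigenvalues of A (roots of the characteristic polynomial,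
   with multiplicity) in nonincreasing order; s`_(i-1) is the i-th largest. *)
Definition is_spectrum (R : realType) n (A : 'M[R]_n) (s : seq R) : Prop :=
  sorted (fun x y => y <= x) s /\ char_poly A = \prod_(x <- s) ('X - x%:P).

Definition is_clique n (e : rel 'I_n) (C : {set 'I_n}) : Prop :=
  forall u v, u \in C -> v \in C -> u != v -> e u v.

(* F = {C_1,...,C_k} is a clique partition: cliques (each covering an edge,
   i.e. of size >= 2) such that every edge lies in exactly one C_j. *)
Definition clique_partition n k (e : rel 'I_n) (C : 'I_k -> {set 'I_n}) : Prop :=
  (forall j, 2 <= #|C j|)%N /\
  (forall j, is_clique e (C j)) /\
  (forall u v, e u v -> exists! j, u \in C j /\ v \in C j).

Definition clique_degree n k (C : 'I_k -> {set 'I_n}) (v : 'I_n) : nat :=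
  #|[set j | v \in C j]|.

Definition clique_regular n k (C : 'I_k -> {set 'I_n}) (t : nat) : Prop :=
  forall v, clique_degree C v = t.

Definition clique_uniform n k (C : 'I_k -> {set 'I_n}) (s : nat) : Prop :=
  forall j, #|C j| = s.

Definition cp_graph n k (C : 'I_k -> {set 'I_n}) : rel 'I_k :=
  fun i j => (i != j) && (C i :&: C j != set0).

(* Let N be the vertex-clique incidence matrix of the partition. Two cliques
   of a clique partition share at most one vertex, so N N^T = D_F + A(G) and
   N^T N = A(P_G) + diag |C_j|, where D_F is the diagonal matrix of
   clique-degrees. Every clique through v contributes its own neighbour of v,
   hence D_F <= D(G) and Q(G) dominates N N^T as a quadratic form.
   For (i), N N^T = A(G) + tI, and the Courant-Fischer principle gives
   q_i >= lambda_i(G) + t. For (ii), N^T N = A(P_G) + sI: when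
   lambda_i(P_G) + s > 0, the matrix N^T maps the span of the i top
   eigenvectors of N^T N injectively onto a subspace on which
   x Q x^T >= (lambda_i(P_G) + s) |x|^2, and otherwise q_i >= 0 because Q is
   positive semidefinite. *)

From mathcomp Require Import all_boot all_order all_algebra.
From mathcomp Require Import reals.
From mathcomp Require Import perm ring lra.
Set Implicit Arguments. Unset Strict Implicit. Unset Printing Implicit Defensive.
Import Order.TTheory GRing.Theory Num.Theory.
Local Open Scope ring_scope.

Section SymmetricSpectrum.
Variable R : rcfType.

Definition sqnorm n (x : 'rV[R]_n) : R := (x *m x^T) 0 0.
Definition qform n (M : 'M[R]_n) (x : 'rV[R]_n) : R := (x *m M *m x^T) 0 0.

Lemma sqnormE n (x : 'rV[R]_n) : sqnorm x = \sum_j x 0 j ^+ 2.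
Proof. by rewrite /sqnorm mxE; apply: eq_bigr => j _; rewrite mxE expr2. Qed.

Lemma sqnorm_ge0 n (x : 'rV[R]_n) : 0 <= sqnorm x.
Proof. by rewrite sqnormE; apply: sumr_ge0 => j _; apply: sqr_ge0. Qed.

Lemma sqnorm_eq0 n (x : 'rV[R]_n) : (sqnorm x == 0) = (x == 0).
Proof.
apply/idP/eqP => [|->]; last by rewrite /sqnorm mul0mx mxE.
rewrite sqnormE psumr_eq0 => [/allP x0|j _]; last exact: sqr_ge0.
apply/rowP => j; rewrite mxE; apply/eqP.
by rewrite -sqrf_eq0; exact: x0 (mem_index_enum j).
Qed.

Lemma sqnorm_gt0 n (x : 'rV[R]_n) : (0 < sqnorm x) = (x != 0).
Proof. by rewrite lt_def sqnorm_ge0 sqnorm_eq0 andbT. Qed.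

Lemma sqnorm_mul n m (N : 'M[R]_(n, m)) x :
  sqnorm (x *m N) = qform (N *m N^T) x.
Proof. by rewrite /sqnorm /qform trmx_mul !mulmxA. Qed.

Lemma qformD n (M1 M2 : 'M[R]_n) x :
  qform (M1 + M2) x = qform M1 x + qform M2 x.
Proof. by rewrite /qform mulmxDr mulmxDl mxE. Qed.

Lemma qform_scalar n (a : R) (x : 'rV[R]_n) : qform a%:M x = a * sqnorm x.
Proof. by rewrite /qform mul_mx_scalar -scalemxAl mxE. Qed.

Lemma qform_diag n (d : 'rV[R]_n) x :
  qform (diag_mx d) x = \sum_u d 0 u * x 0 u ^+ 2.
Proof.
rewrite /qform mul_mx_diag mxE; apply: eq_bigr => u _.
by rewrite !mxE expr2 mulrCA mulrA.
Qed.

Lemma sqnormB_scale n (u v : 'rV[R]_n) (t : R) :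
  sqnorm (u - t *: v) = sqnorm u - 2 * t * (u *m v^T) 0 0 + t ^+ 2 * sqnorm v.
Proof.
rewrite !sqnormE mxE !mulr_sumr -sumrB -big_split /=.
by apply: eq_bigr => j _; rewrite !mxE; ring.
Qed.

Lemma sqnorm_mul_ge_qform n (M : 'M[R]_n) x (c : R) :
  0 <= c -> c * sqnorm x <= qform M x -> c * qform M x <= sqnorm (x *m M).
Proof.
move=> c0 cx; have := sqnorm_ge0 (x *m M - c *: x).
rewrite sqnormB_scale -/(qform M x) => dist_ge0.
have : c * (c * sqnorm x) <= c * qform M x by exact: ler_wpM2l.
nra.
Qed.

Lemma size_char_poly_split n (M : 'M[R]_n) (s : seq R) :
  char_poly M = \prod_(x <- s) ('X - x%:P) -> size s = n.
Proof.
by move=> chM; have := size_char_poly M; rewrite chM size_prod_XsubC => -[].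
Qed.

Lemma sym_mx_sqr_eq0 n (S : 'M[R]_n) : S^T = S -> S *m S = 0 -> S = 0.
Proof.
move=> sS SS; apply/row_matrixP => i; apply/eqP.
rewrite row0 -sqnorm_eq0 sqnormE.
have <- : (S *m S) i i = \sum_j row i S 0 j ^+ 2.
  by rewrite mxE; apply: eq_bigr => j _; rewrite !mxE expr2 -{2}sS mxE.
by rewrite SS mxE.
Qed.

Lemma sym_mx_nilpotent_eq0 n (S : 'M[R]_n) m :
  S^T = S -> S ^+ m.+1 = 0 -> S = 0.
Proof.
move=> sS; elim: m => [|m IHm]; first by rewrite expr1.
have sSm : (S ^+ m.+1)^T = S ^+ m.+1.
  elim: m.+1 => [|p IHp]; first by rewrite !expr0 trmx1.
  by rewrite exprS -mulmxE trmx_mul IHp sS mulmxE -exprSr exprS.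
move=> Sm2; apply: IHm; apply: sym_mx_sqr_eq0 => //.
by rewrite mulmxE -exprD addSn -addnS exprD Sm2 mulr0.
Qed.

Lemma trmx_horner_sym n (M : 'M[R]_n.+1) p :
  M^T = M -> (horner_mx M p)^T = horner_mx M p.
Proof.
move=> sM; elim/poly_ind: p => [|p c IHp]; first by rewrite rmorph0 trmx0.
rewrite rmorphD rmorphM /= horner_mx_X horner_mx_C linearD /= tr_scalar_mx.
rewrite -mulmxE trmx_mul IHp sM; congr (_ + _).
exact: comm_mx_horner (comm_mx_refl M).
Qed.

Lemma char_poly_conj n (P D : 'M[R]_n) : P \in unitmx ->
  char_poly (invmx P *m D *m P) = char_poly D.
Proof.
move=> uP; rewrite /char_poly /char_poly_mx.
set f := map_mx (@polyC R).
have fM (A B : 'M[R]_n) : f (A *m B) = f A *m f B by rewrite /f map_mxM.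
have fVP : f (invmx P) *m f P = 1%:M by rewrite -fM mulVmx // /f map_mx1.
have X_conj : 'X%:M = f (invmx P) *m 'X%:M *m f P :> 'M_n.
  by rewrite -scalemx1 -scalemxAr mulmx1 -scalemxAl fVP.
rewrite {1}X_conj !fM -mulmxBl -mulmxBr !det_mulmx mulrAC -det_mulmx.
by rewrite fVP det1 mul1r.
Qed.

(* The squarefree part [p] of [char_poly M] annihilates [M]: some power of
   [p] is a multiple of [char_poly M], and [horner_mx M p] is symmetric. *)
Lemma sym_split_diagonalizable n (M : 'M[R]_n.+1) (s : seq R) : M^T = M ->
  char_poly M = \prod_(x <- s) ('X - x%:P) -> diagonalizable M.
Proof.
move=> sM chM; have sz := size_char_poly_split chM.
apply/diagonalizableP; exists (undup s); first exact: undup_uniq.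
apply: mxminpoly_min; set p := \prod_(x <- undup s) _.
apply: (@sym_mx_nilpotent_eq0 _ _ n (trmx_horner_sym p sM)).
rewrite -rmorphXn /=.
have -> : p ^+ n.+1 = char_poly M *
    \prod_(x <- undup s) ('X - x%:P) ^+ (n.+1 - count_mem x s).
  rewrite /p -prodrXl chM -(big_undup_iterop_count _ s xpredT) -big_split /=.
  apply: eq_bigr => x _; rewrite Monoid.iteropE iter_mulr_1 -exprD subnKC //.
  by rewrite -sz count_size.
by rewrite rmorphM /= Cayley_Hamilton mul0r.
Qed.

Lemma sym_eigenbasis n (M : 'M[R]_n) (s : seq R) : M^T = M ->
  char_poly M = \prod_(x <- s) ('X - x%:P) ->
  exists2 P : 'M[R]_n, P \in unitmx &
    forall j : 'I_n, row j P *m M = s`_j *: row j P.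
Proof.
case: n M => [|n] M sM chM; first by exists 1%:M; [exact: unitmx1 | case].
have [P0 uP0 dP0] := sym_split_diagonalizable sM chM.
have [d Md] := mxpoly.diagonalizable_forLR uP0 dP0.
rewrite mxpoly.conjVmx // in Md.
have P0M : P0 *m M = diag_mx d *m P0 by rewrite Md !mulmxA mulmxV // mul1mx.
have chMd : char_poly M = \prod_(j < n.+1) ('X - (d 0 j)%:P).
  rewrite Md char_poly_conj // char_poly_trig ?diag_mx_is_trig //.
  by apply: eq_bigr => j _; rewrite mxE eqxx mulr1n.
have : perm_eq s [tuple d 0 j | j < n.+1].
  apply/allP => x _; apply/eqP; rewrite -!mu_prod_XsubC -chM chMd.
  by rewrite big_map val_ord_tuple big_enum.
case/tuple_permP => sg s_sg; exists (row_perm sg P0).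
  by rewrite row_permE unitmx_mul unitmx_perm.
move=> j; have -> : row j (row_perm sg P0) = row (sg j) P0.
  by apply/rowP => l; rewrite !mxE.
rewrite s_sg nth_mktuple tnth_mktuple -row_mul P0M mul_diag_mx.
by apply/rowP => l; rewrite !mxE.
Qed.

Lemma eigenrows_orthogonal n (M : 'M[R]_n) (u v : 'rV[R]_n) (a b : R) :
  M^T = M -> u *m M = a *: u -> v *m M = b *: v -> a != b -> u *m v^T = 0.
Proof.
move=> sM uM vM ab; have : (a - b) *: (u *m v^T) = 0.
  rewrite scalerBl scalemxAl -uM scalemxAr -linearZ /= -vM.
  by rewrite trmx_mul sM mulmxA subrr.
by move/eqP; rewrite scaler_eq0 subr_eq0 (negPf ab) => /eqP.
Qed.

(* Cross terms only pair vectors with equal keys, so the weight [f (key j)]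
   splits as [sqrt (f (key j)) * sqrt (f (key l))] and the form is a square. *)
Lemma weighted_orthogonal_sum_ge0 n m (u : 'I_n -> 'rV[R]_m) (key : 'I_n -> R)
    (f : R -> R) :
  (forall j l, key j != key l -> u j *m (u l)^T = 0) ->
  (forall j, u j != 0 -> 0 <= f (key j)) ->
  0 <= ((\sum_j f (key j) *: u j) *m (\sum_l u l)^T) 0 0.
Proof.
move=> orth f_ge0; pose r j := Num.sqrt (f (key j)).
suff -> : (\sum_j f (key j) *: u j) *m (\sum_l u l)^T =
          (\sum_j r j *: u j) *m (\sum_l r l *: u l)^T by exact: sqnorm_ge0.
have trmx_sum (F : 'I_n -> 'rV[R]_m) : (\sum_l F l)^T = \sum_l (F l)^T.
  exact: raddf_sum.
rewrite !trmx_sum !mulmx_suml; apply: eq_bigr => j _.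
rewrite !mulmx_sumr; apply: eq_bigr => l _.
rewrite linearZ /= -!scalemxAl -scalemxAr scalerA.
have [kjl|/orth->] := eqVneq (key j) (key l); last by rewrite !scaler0.
have [->|uj] := eqVneq (u j) 0; first by rewrite mul0mx !scaler0.
have [->|ul] := eqVneq (u l) 0; first by rewrite trmx0 mulmx0 !scaler0.
by rewrite /r -kjl -expr2 sqr_sqrtr ?f_ge0.
Qed.

Lemma qform_eigen_ge n (M P : 'M[R]_n) (d : 'I_n -> R) (b : 'rV[R]_n) lam :
  M^T = M -> (forall j, row j P *m M = d j *: row j P) ->
  (forall j, b 0 j != 0 -> lam <= d j) ->
  lam * sqnorm (b *m P) <= qform M (b *m P).
Proof.
move=> sM eigP lam_le; pose u j := b 0 j *: row j P.
have eig_u j : u j *m M = d j *: u j.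
  by rewrite -scalemxAl eigP !scalerA mulrC.
have bPE : b *m P = \sum_j u j by exact: mulmx_sum_row.
rewrite -subr_ge0; have -> : qform M (b *m P) - lam * sqnorm (b *m P) =
          ((\sum_j (d j - lam) *: u j) *m (\sum_l u l)^T) 0 0.
  have -> : \sum_j (d j - lam) *: u j = b *m P *m M - lam *: (b *m P).
    rewrite bPE mulmx_suml scaler_sumr -sumrB.
    by apply: eq_bigr => j _; rewrite eig_u scalerBl.
  rewrite -bPE mulmxBl -scalemxAl.
  by rewrite /qform /sqnorm !mxE.
apply: (weighted_orthogonal_sum_ge0 (key := d) (f := fun y => y - lam)).
  by move=> j l; apply: eigenrows_orthogonal sM (eig_u j) (eig_u l).
move=> j uj0; rewrite subr_ge0; apply: lam_le; apply: contra_neq uj0 => bj0.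
by rewrite /u bj0 scale0r.
Qed.

Lemma qform_eigen_le n (M P : 'M[R]_n) (d : 'I_n -> R) (b : 'rV[R]_n) lam :
  M^T = M -> (forall j, row j P *m M = d j *: row j P) ->
  (forall j, b 0 j != 0 -> d j <= lam) ->
  qform M (b *m P) <= lam * sqnorm (b *m P).
Proof.
move=> sM eigP le_lam; rewrite -lerN2 -mulNr.
have -> : - qform M (b *m P) = qform (- M) (b *m P).
  by rewrite /qform mulmxN mulNmx [RHS]mxE.
apply: (qform_eigen_ge (d := fun j => - d j)).
- by rewrite linearN /= sM.
- by move=> j; rewrite mulmxN eigP scaleNr.
- by move=> j /le_lam; rewrite lerN2.
Qed.

Lemma mul_pid_mx_entry n r (a : 'rV[R]_n) (j : 'I_n) :
  (a *m pid_mx r) 0 j = if (j < r)%N then a 0 j else 0.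
Proof.
rewrite mxE (bigD1 j) //= big1 => [|l lj]; last first.
  by rewrite mxE (_ : (l == j :> nat) = false) ?mulr0 //; exact/negbTE.
by rewrite mxE eqxx; case: (j < r)%N; rewrite ?mulr1 ?mulr0 addr0.
Qed.

Lemma sorted_ge_nth (s : seq R) (j l : nat) :
  sorted >=%R s -> (j <= l)%N -> (l < size s)%N -> s`_l <= s`_j.
Proof.
move=> ss jl ls; apply: (sorted_leq_nth (rev_trans le_trans) _ 0 ss) => //.
by rewrite inE (leq_ltn_trans jl ls).
Qed.

Lemma nonzero_row_capmx n m1 m2 (U : 'M[R]_(m1, n)) (V : 'M[R]_(m2, n)) :
  (n < \rank U + \rank V)%N -> exists2 x : 'rV[R]_n, x != 0 & (x <= U :&: V)%MS.
Proof.
rewrite -mxrank_sum_cap => rk; have /rowV0Pn[x xUV x0] : (U :&: V)%MS != 0.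
  rewrite -mxrank_eq0; move: rk; apply: contraTneq => ->.
  by rewrite addn0 -leqNgt rank_leq_col.
by exists x.
Qed.

Section SortedSpectrum.
Variables (n : nat) (M : 'M[R]_n) (s : seq R).
Hypotheses (sM : M^T = M) (s_sorted : sorted >=%R s)
           (chM : char_poly M = \prod_(x <- s) ('X - x%:P)).

Lemma eigen_subspace_ge (i0 : nat) : (i0 < n)%N ->
  exists2 W : 'M[R]_n, \rank W = i0.+1 &
    forall x, (x <= W)%MS -> s`_i0 * sqnorm x <= qform M x.
Proof.
move=> i0n; have [P uP eigP] := sym_eigenbasis sM chM.
exists (pid_mx i0.+1 *m P).
  by rewrite mxrankMfree ?row_free_unit // rank_pid_mx.
move=> _ /submxP[a ->]; rewrite mulmxA; apply: (qform_eigen_ge sM eigP) => j.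
rewrite mul_pid_mx_entry; case: ifP => [ji0 _|]; last by rewrite eqxx.
by apply: sorted_ge_nth; rewrite ?(size_char_poly_split chM).
Qed.

Lemma eigen_subspace_le (i0 : nat) : (i0 < n)%N ->
  exists2 W : 'M[R]_n, \rank W = (n - i0)%N &
    forall x, (x <= W)%MS -> qform M x <= s`_i0 * sqnorm x.
Proof.
move=> i0n; have [P uP eigP] := sym_eigenbasis sM chM.
exists (copid_mx i0 *m P).
  by rewrite mxrankMfree ?row_free_unit // rank_copid_mx // ltnW.
move=> _ /submxP[a ->]; rewrite mulmxA; apply: (qform_eigen_le sM eigP) => j.
rewrite /copid_mx mulmxBr mulmx1 [_ 0 j]mxE [X in _ + X]mxE mul_pid_mx_entry.
case: ltnP => [_|i0j _]; first by rewrite subrr eqxx.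
by apply: sorted_ge_nth; rewrite ?(size_char_poly_split chM).
Qed.

Lemma eigen_ge_of_subspace m (W : 'M[R]_(m, n)) (i0 : nat) (lam : R) :
  \rank W = i0.+1 -> (forall x, (x <= W)%MS -> lam * sqnorm x <= qform M x) ->
  lam <= s`_i0.
Proof.
move=> rW lamW; have i0n : (i0 < n)%N by rewrite -rW rank_leq_col.
have [W' rW' W'le] := eigen_subspace_le i0n.
have [|x x0] := nonzero_row_capmx (U := W) (V := W').
  by rewrite rW rW' addSn subnKC // ltnW.
rewrite sub_capmx => /andP[xW xW']; rewrite -(ler_pM2r (_ : 0 < sqnorm x)).
  exact: le_trans (lamW x xW) (W'le x xW').
by rewrite sqnorm_gt0.
Qed.

End SortedSpectrum.

Lemma eigen_le_of_qform_le n (A Q : 'M[R]_n) (sA sQ : seq R) (i0 : nat) (c : R) :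
  A^T = A -> Q^T = Q ->
  sorted >=%R sA -> char_poly A = \prod_(x <- sA) ('X - x%:P) ->
  sorted >=%R sQ -> char_poly Q = \prod_(x <- sQ) ('X - x%:P) ->
  (i0 < n)%N -> (forall x, qform A x + c * sqnorm x <= qform Q x) ->
  sA`_i0 + c <= sQ`_i0.
Proof.
move=> sA_sym sQ_sym sA_sorted chA sQ_sorted chQ i0n AQ.
have [W rW Wge] := eigen_subspace_ge sA_sym sA_sorted chA i0n.
apply: (eigen_ge_of_subspace sQ_sym sQ_sorted chQ rW) => x xW.
by rewrite mulrDl; apply: le_trans (AQ x); rewrite lerD2r Wge.
Qed.

Lemma eigen_le_of_gram n k (N : 'M[R]_(n, k)) (Q : 'M[R]_n) (B : 'M[R]_k)
    (sQ sB : seq R) (i0 : nat) (c : R) :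
  Q^T = Q -> B^T = B ->
  sorted >=%R sQ -> char_poly Q = \prod_(x <- sQ) ('X - x%:P) ->
  sorted >=%R sB -> char_poly B = \prod_(x <- sB) ('X - x%:P) ->
  (i0 < n)%N -> (i0 < k)%N ->
  N^T *m N = B + c%:M -> (forall y, sqnorm (y *m N) <= qform Q y) ->
  sB`_i0 + c <= sQ`_i0.
Proof.
move=> sQ_sym sB_sym sQ_sorted chQ sB_sorted chB i0n i0k NtN NQ.
have eigQ_ge := eigen_ge_of_subspace sQ_sym sQ_sorted chQ.
have [c_le0|c_gt0] := leP (sB`_i0 + c) 0.
  apply: le_trans c_le0 (eigQ_ge _ (pid_mx i0.+1 : 'M_n) _ _ _ _).
    by rewrite rank_pid_mx.
  by move=> y _; rewrite mul0r; apply: le_trans (NQ y); apply: sqnorm_ge0.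
have [W rW Wge] := eigen_subspace_ge sB_sym sB_sorted chB i0k.
have NtN_ge x : (x <= W)%MS -> (sB`_i0 + c) * sqnorm x <= sqnorm (x *m N^T).
  move=> xW; rewrite sqnorm_mul trmxK NtN qformD qform_scalar.
  by rewrite mulrDl lerD2r Wge.
apply: (eigQ_ge _ (W *m N^T)).
  rewrite -[RHS]rW -(mxrank_mul_ker W N^T) -[LHS]addn0; congr (_ + _)%N.
  apply/esym/eqP; rewrite mxrank_eq0; apply/rowV0P => x.
  rewrite sub_capmx => /andP[xW /sub_kermxP xN]; apply/eqP; rewrite -sqnorm_eq0.
  move/eqP: xN; rewrite -sqnorm_eq0 => /eqP xN.
  have := NtN_ge x xW; rewrite xN pmulr_rle0 // => x_le0.
  by rewrite eq_le x_le0 sqnorm_ge0.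
move=> _ /submxP[z ->]; rewrite mulmxA; set x := z *m W.
have sqN : sqnorm (x *m N^T) = qform (N^T *m N) x by rewrite sqnorm_mul trmxK.
apply: le_trans (NQ _); rewrite -[x *m N^T *m N]mulmxA sqN.
apply: sqnorm_mul_ge_qform; first exact: ltW.
by rewrite -sqN NtN_ge // submxMl.
Qed.

End SymmetricSpectrum.

Lemma sum_indicator_card (R : nzSemiRingType) (T : finType) (A : {pred T}) :
  \sum_(j : T) ((j \in A)%:R : R) = #|A|%:R.
Proof.
rewrite -sum1_card natr_sum [RHS]big_mkcond /=.
by apply: eq_bigr => j _; case: (j \in A).
Qed.

Section CliquePartition.
Variables (R : realType) (n k : nat) (e : rel 'I_n) (C : 'I_k -> {set 'I_n}).
Hypotheses (e_simple : simple_graph e) (C_part : clique_partition e C).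

Definition incidence_mx : 'M[R]_(n, k) := \matrix_(u, j) (u \in C j)%:R.

Lemma card_cliques_through2 u v : u != v ->
  #|[pred j | (u \in C j) && (v \in C j)]| = e u v.
Proof.
have [_ [C_clique C_unique]] := C_part; move=> uv.
case euv: (e u v).
  have [j [[uj vj] j_unique]] := C_unique u v euv.
  rewrite (@eq_card _ _ (pred1 j)) ?card1 // => l; rewrite !inE.
  by apply/andP/eqP => [[ul vl]|->] //; rewrite (j_unique l).
rewrite eq_card0 // => j; rewrite !inE; apply/negbTE/negP => /andP[uj vj].
by move: (C_clique j u v uj vj uv); rewrite euv.
Qed.

Lemma card_clique_meet_le1 j l : j != l -> (#|C j :&: C l| <= 1)%N.
Proof.
have [_ [C_clique C_unique]] := C_part; move=> jl.
rewrite leqNgt; apply/negP => /card_gt1P[u [v [+ + uv]]].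
rewrite !inE => /andP[uj ul] /andP[vj vl].
have [j0 [_ j0_unique]] := C_unique u v (C_clique j u v uj vj uv).
by move: jl; rewrite -(j0_unique j) // -(j0_unique l) // eqxx.
Qed.

(* Each clique through [u] has at least two vertices; picking a neighbour of
   [u] in it is injective since two cliques share no edge. *)
Lemma clique_degree_le_deg u : (clique_degree C u <= #|[set w | e u w]|)%N.
Proof.
have [C_ge2 [C_clique C_unique]] := C_part.
pose f j := odflt u [pick w in C j :\ u].
have fP j : u \in C j -> (f j \in C j) && (f j != u).
  move=> uj; rewrite /f; case: pickP => [w|C_u0] /=.
    by rewrite !inE => /andP[-> ->].
  by have := C_ge2 j; rewrite (cardsD1 u) uj (eq_card0 C_u0).
rewrite /clique_degree -(@card_in_imset _ _ f); last first.
  move=> j l; rewrite !inE => uj ul fjl.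
  have /andP[fj fju] := fP j uj; have /andP[fl _] := fP l ul.
  have ufj : u != f j by rewrite eq_sym.
  have [j0 [_ j0_unique]] := C_unique u (f j) (C_clique j u (f j) uj fj ufj).
  by rewrite -(j0_unique j) // -(j0_unique l) // fjl.
apply/subset_leq_card/subsetP => w /imsetP[j]; rewrite inE => uj ->.
have /andP[fj fju] := fP j uj.
by rewrite inE; apply: (C_clique j) => //; rewrite eq_sym.
Qed.

Lemma incidence_mx_mul_tr :
  incidence_mx *m incidence_mx^T =
  diag_mx (\row_u (clique_degree C u)%:R) + adjmx R e.
Proof.
have [_ e_irr] := e_simple; apply/matrixP => u v.
rewrite !mxE (eq_bigr (fun j => (j \in [pred j | (u \in C j) && (v \in C j)])%:R))
  => [|j _]; last by rewrite !mxE -natrM mulnb.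
rewrite sum_indicator_card; case: eqVneq => [<-|uv].
  rewrite (negbTE (e_irr u)) addr0 mulr1n /clique_degree.
  by congr (_%:R); apply: eq_card => j; rewrite !inE andbb.
by rewrite mulr0n add0r card_cliques_through2.
Qed.

Lemma incidence_mx_tr_mul (s : nat) : clique_uniform C s ->
  incidence_mx^T *m incidence_mx = adjmx R (cp_graph C) + (s%:R)%:M.
Proof.
move=> C_unif; apply/matrixP => j l.
rewrite !mxE (eq_bigr (fun u => (u \in C j :&: C l)%:R)) => [|u _]; last first.
  by rewrite !mxE -natrM mulnb in_setI.
rewrite sum_indicator_card /cp_graph; case: eqVneq => [<-|jl] /=.
  by rewrite setIid C_unif add0r mulr1n.
rewrite mulr0n addr0; congr (_%:R).
by have := card_clique_meet_le1 jl; rewrite -card_gt0; case: #|_| => [|[]].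
Qed.

Lemma degmx_diag : degmx R e = diag_mx (\row_u #|[set w | e u w]|%:R).
Proof.
by apply/matrixP => u v; rewrite !mxE mulr_natl; case: eqVneq.
Qed.

Lemma tr_adjmx m (r : rel 'I_m) : (forall u v, r u v = r v u) ->
  (adjmx R r)^T = adjmx R r.
Proof. by move=> r_sym; apply/matrixP => u v; rewrite !mxE r_sym. Qed.

Lemma tr_signless_lap : (signless_lap R e)^T = signless_lap R e.
Proof.
have [e_sym _] := e_simple.
by rewrite /signless_lap linearD /= tr_adjmx // degmx_diag tr_diag_mx.
Qed.

Lemma sqnorm_incidence_le_signless_lap y :
  sqnorm (y *m incidence_mx) <= qform (signless_lap R e) y.
Proof.
rewrite sqnorm_mul incidence_mx_mul_tr /signless_lap degmx_diag !qformD lerD2r.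
rewrite !qform_diag; apply: ler_sum => u _; rewrite !mxE.
by rewrite ler_wpM2r ?sqr_ge0 // ler_nat clique_degree_le_deg.
Qed.

Lemma clique_regular_qform (t : nat) x : clique_regular C t ->
  qform (adjmx R e) x + t%:R * sqnorm x = sqnorm (x *m incidence_mx).
Proof.
move=> C_reg; rewrite sqnorm_mul incidence_mx_mul_tr qformD addrC.
suff -> : \row_u (clique_degree C u)%:R = const_mx t%:R :> 'rV[R]_n.
  by rewrite diag_const_mx qform_scalar.
by apply/rowP => u; rewrite !mxE C_reg.
Qed.

End CliquePartition.

Theorem mainTheorem8 (R : realType) (n k : nat) (e : rel 'I_n)
    (C : 'I_k -> {set 'I_n}) (i : nat) :
  simple_graph e -> clique_partition e C -> (1 <= i <= minn n k)%N ->
  (forall t : nat, clique_regular C t ->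
     forall sQ sA : seq R,
       is_spectrum (signless_lap R e) sQ -> is_spectrum (adjmx R e) sA ->
       t%:R <= sQ`_i.-1 - sA`_i.-1) /\
  (forall s : nat, clique_uniform C s ->
     forall sQ sP : seq R,
       is_spectrum (signless_lap R e) sQ -> is_spectrum (adjmx R (cp_graph C)) sP ->
       s%:R <= sQ`_i.-1 - sP`_i.-1).
Proof.
move=> e_simple C_part /andP[i_gt0]; rewrite leq_min => /andP[i_le_n i_le_k].
have i_lt_n : (i.-1 < n)%N by rewrite prednK.
have i_lt_k : (i.-1 < k)%N by rewrite prednK.
have Q_sym := tr_signless_lap R e_simple.
split=> [t C_reg sQ sA [sQ_sorted chQ] [sA_sorted chA] |
         s C_unif sQ sP [sQ_sorted chQ] [sP_sorted chP]]; rewrite lerBrDl.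
- have A_sym : (adjmx R e)^T = adjmx R e by apply: tr_adjmx; case: e_simple.
  apply: (eigen_le_of_qform_le A_sym Q_sym) => // x.
  rewrite (clique_regular_qform e_simple C_part) //.
  exact: sqnorm_incidence_le_signless_lap.
- have P_sym : (adjmx R (cp_graph C))^T = adjmx R (cp_graph C).
    by apply: tr_adjmx => j l; rewrite /cp_graph eq_sym setIC.
  apply: (eigen_le_of_gram (N := incidence_mx R C) Q_sym P_sym) => //.
    exact: (incidence_mx_tr_mul R C_part C_unif).
  exact: sqnorm_incidence_le_signless_lap.
Qed.
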